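(* Let $S$ be an expanding automaton semigroup with a unique maximal subgroup $G$. Then $G$ is isomorphic to a self-similar group.
   Context: An expanding automaton is a quadruple $(Q,\Sigma,t,o)$ with $Q$ a finite set of states, $\Sigma$ a finite alphabet, $t:Q\times\Sigma\to Q$ and $o:Q\times\Sigma\to\Sigma^+$. Each state $q$ induces $q:\Sigma^*\to\Sigma^*$ by $q(\emptyset)=\emptyset$, $q(\sigma w)=o(q,\sigma)\,q'(w)$ with $q'=t(q,\sigma)$; an expanding automaton semigroup is the semigroup of maps generated under composition by the states. A subgroup of $S$ is a subsemigroup which is a group. A self-similar group is the group generated by the states of an invertible synchronous automaton (output in $\Sigma$, $o(q,\cdot)$ a permutation of $\Sigma$ for each $q$) with possibly infinitely many states. *)

From mathcomp Require Import all_boot.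
Set Implicit Arguments. Unset Strict Implicit. Unset Printing Implicit Defensive.

Record expanding_automaton (Q Sigma : finType) := ExpAut {
  ea_t : Q -> Sigma -> Q;
  ea_o : Q -> Sigma -> seq Sigma;
  ea_o_nonempty : forall q a, ea_o q a <> [::]
}.

Fixpoint ea_act (Q Sigma : finType) (A : expanding_automaton Q Sigma)
    (q : Q) (w : seq Sigma) : seq Sigma :=
  match w with
  | [::] => [::]
  | a :: w' => ea_o A q a ++ ea_act A (ea_t A q a) w'
  end.

Inductive in_ea_semigroup (Q Sigma : finType) (A : expanding_automaton Q Sigma)
  : (seq Sigma -> seq Sigma) -> Prop :=
| eas_gen : forall q, in_ea_semigroup A (ea_act A q)
| eas_comp : forall f g, in_ea_semigroup A f -> in_ea_semigroup A g ->
             in_ea_semigroup A (f \o g).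

(* A subgroup of S: a subsemigroup of S which is a group under composition
   (its identity element need not be the identity map). *)
Definition is_subgroup (Q Sigma : finType) (A : expanding_automaton Q Sigma)
    (H : (seq Sigma -> seq Sigma) -> Prop) : Prop :=
  (forall f, H f -> in_ea_semigroup A f) /\
  (forall f g, H f -> H g -> H (f \o g)) /\
  exists e, H e /\
    (forall f, H f -> e \o f = f /\ f \o e = f) /\
    (forall f, H f -> exists g, H g /\ f \o g = e /\ g \o f = e).

Definition is_maximal_subgroup (Q Sigma : finType) (A : expanding_automaton Q Sigma)
    (H : (seq Sigma -> seq Sigma) -> Prop) : Prop :=
  is_subgroup A H /\
  forall K, is_subgroup A K -> (forall f, H f -> K f) -> forall f, K f -> H f.

Definition unique_maximal_subgroup (Q Sigma : finType) (A : expanding_automaton Q Sigma)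
    (G : (seq Sigma -> seq Sigma) -> Prop) : Prop :=
  is_maximal_subgroup A G /\
  forall H, is_maximal_subgroup A H -> forall f, H f <-> G f.

(* Invertible synchronous automaton over a finite alphabet X with a possibly
   infinite set of states; each o(q, .) is a permutation of X. *)
Record ss_automaton (X : finType) := SSAut {
  ss_state : Type;
  ss_t : ss_state -> X -> ss_state;
  ss_o : ss_state -> X -> X;
  ss_o_bij : forall q, bijective (ss_o q)
}.

Fixpoint ss_act (X : finType) (B : ss_automaton X) (q : ss_state B)
    (w : seq X) : seq X :=
  match w with
  | [::] => [::]
  | a :: w' => ss_o q a :: @ss_act X B (ss_t q a) w'
  end.

Inductive in_ss_group (X : finType) (B : ss_automaton X)
  : (seq X -> seq X) -> Prop :=
| ssg_id : in_ss_group B id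
| ssg_gen : forall q, in_ss_group B (@ss_act X B q)
| ssg_comp : forall f g, in_ss_group B f -> in_ss_group B g ->
             in_ss_group B (f \o g)
| ssg_inv : forall f g, in_ss_group B f ->
            (forall w, f (g w) = w) -> (forall w, g (f w) = w) ->
            in_ss_group B g.

Definition group_iso_to_ss (Sigma X : finType) (G : (seq Sigma -> seq Sigma) -> Prop)
    (B : ss_automaton X) : Prop :=
  exists phi : (seq Sigma -> seq Sigma) -> (seq X -> seq X),
    (forall f, G f -> in_ss_group B (phi f)) /\
    (forall f g, G f -> G g -> phi f = phi g -> f = g) /\
    (forall h, in_ss_group B h -> exists f, G f /\ phi f = h) /\
    (forall f g, G f -> G g -> phi (f \o g) = phi f \o phi g).

Definition iso_to_self_similar_group (Sigma : finType)
    (G : (seq Sigma -> seq Sigma) -> Prop) : Prop :=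
  exists (X : finType) (B : ss_automaton X), group_iso_to_ss G B.

From mathcomp Require Import all_boot zify.
From Stdlib Require Import FunctionalExtensionality.
Set Implicit Arguments. Unset Strict Implicit. Unset Printing Implicit Defensive.

(* Every element f of S has sections: f (u ++ v) = f u ++ f|_u v with f|_u in S.
   For an idempotent h of S, the group of units of h S h is a maximal subgroup;
   since G is the only one, S has a single idempotent e and G is the group of
   units of e S e.  The section of e at an e-fixed word is again idempotent,
   hence equal to e, so e (u ++ v) = u ++ e v whenever e u = u.  Hence every
   e-fixed word is a concatenation of atoms (minimal nonempty fixed words),
   each atom equals e [:: c] for its first letter c, and G permutes the finitely
   many atoms.  Letting G act on words over the atoms letter by letter through
   its sections gives an invertible synchronous automaton, and this action is
   faithful because f w = f (e w) and e w is a concatenation of atoms. *)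

Section Sections.
Variables (Q Sigma : finType) (A : expanding_automaton Q Sigma).
Local Notation S := (in_ea_semigroup A).

Lemma ea_act_cat q u v :
  ea_act A q (u ++ v) = ea_act A q u ++ ea_act A (foldl (ea_t A) q u) v.
Proof. by elim: u q => [|a u IH] q //=; rewrite IH catA. Qed.

Lemma ea_semigroup_cat f : S f -> forall u,
  exists2 h, S h & forall v, f (u ++ v) = f u ++ h v.
Proof.
elim=> [q|f1 g1 _ IHf _ IHg] u.
  by exists (ea_act A (foldl (ea_t A) q u)); [exact: eas_gen | move=> v; rewrite ea_act_cat].
have [hg Shg Eg] := IHg u; have [hf Shf Ef] := IHf (g1 u).
by exists (hf \o hg); [exact: eas_comp | move=> v /=; rewrite Eg Ef].
Qed.

Lemma ea_semigroup_nil f : S f -> f [::] = [::].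
Proof. by elim=> [q|f1 g1 _ IHf _ IHg] //=; rewrite IHg IHf. Qed.

Lemma ea_semigroup_size f : S f -> forall w, size w <= size (f w).
Proof.
elim=> [q|f1 g1 _ IHf _ IHg] w /=; last exact: leq_trans (IHg w) (IHf _).
elim: w q => [|a w IH] q //=; rewrite size_cat -add1n leq_add //.
by case E: (ea_o A q a) => //; case: (ea_o_nonempty E).
Qed.

Definition sect (f : seq Sigma -> seq Sigma) u v := drop (size (f u)) (f (u ++ v)).

Lemma sect_cat f u v : S f -> f (u ++ v) = f u ++ sect f u v.
Proof. by move=> /ea_semigroup_cat/(_ u) [h _ E]; rewrite /sect !E drop_size_cat. Qed.

Lemma sect_semigroup f u : S f -> S (sect f u).
Proof.
move=> /ea_semigroup_cat/(_ u) [h Sh E].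
suff -> : sect f u = h by [].
by apply: functional_extensionality => v; rewrite /sect E drop_size_cat.
Qed.

Lemma sect_comp f g u : S f -> S g -> sect (f \o g) u = sect f (g u) \o sect g u.
Proof.
move=> Sf Sg; apply: functional_extensionality => v.
by rewrite /= {1}/sect /= (sect_cat u v Sg) (sect_cat (g u) _ Sf) drop_size_cat.
Qed.

End Sections.

Lemma idempotent_group_identity (T : Type) (K : (T -> T) -> Prop) (e h : T -> T) :
  (forall f, K f -> e \o f = f) ->
  (forall f, K f -> exists g, K g /\ f \o g = e /\ g \o f = e) ->
  K h -> h \o h = h -> h = e.
Proof.
move=> idl inv Kh hh; have [g [_ [_ gh]]] := inv h Kh.
by rewrite -gh -{2}hh compA gh idl.
Qed.

Section HClass.
Variables (Q Sigma : finType) (A : expanding_automaton Q Sigma).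
Local Notation S := (in_ea_semigroup A).

(* The group of units of the monoid h S h, i.e. Green's H-class of h. *)
Definition hclass (h f : seq Sigma -> seq Sigma) :=
  S f /\ h \o f = f /\ f \o h = f /\
  exists g, S g /\ h \o g = g /\ g \o h = g /\ f \o g = h /\ g \o f = h.

Variables (h : seq Sigma -> seq Sigma) (Sh : S h) (hh : h \o h = h).

Lemma hclass_id : hclass h h.
Proof. by do 3!split=> //; exists h. Qed.

Lemma hclass_comp f g : hclass h f -> hclass h g -> hclass h (f \o g).
Proof.
move=> [Sf [lf [rf [f' [Sf' [lf' [rf' [ff' f'f]]]]]]]].
move=> [Sg [lg [rg [g' [Sg' [lg' [rg' [gg' g'g]]]]]]]].
split; first exact: eas_comp.
split; first by rewrite compA lf.
split; first by rewrite -compA rg.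
exists (g' \o f'); split; first exact: eas_comp.
split; first by rewrite compA lg'.
split; first by rewrite -compA rf'.
split; first by rewrite -compA (compA g) gg' lf' ff'.
by rewrite -compA (compA f') f'f lg g'g.
Qed.

Lemma hclass_inv f : hclass h f -> exists g, hclass h g /\ f \o g = h /\ g \o f = h.
Proof.
move=> [Sf [lf [rf [g [Sg [lg [rg [fg gf]]]]]]]].
by exists g; do 4!split=> //; exists f.
Qed.

Lemma hclass_subgroup : is_subgroup A (hclass h).
Proof.
split; first by move=> f [].
split; first exact: hclass_comp.
exists h; split; first exact: hclass_id.
split; last exact: hclass_inv.
by move=> f [_ [lf [rf _]]].
Qed.

Lemma hclass_maximal : is_maximal_subgroup A (hclass h).
Proof.
split; first exact: hclass_subgroup.
move=> K [KS [_ [e [_ [idK invK]]]]] sub f Kf.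
have Kh : K h by apply/sub/hclass_id.
have -> : h = e by apply: (idempotent_group_identity _ invK) => // g /idK [].
have [g [Kg [fg gf]]] := invK f Kf.
have [[lf rf] [lg rg]] := (idK f Kf, idK g Kg).
split; first exact: KS.
by do 2!split=> //; exists g; split; first exact: KS.
Qed.

End HClass.

Lemma unique_maximal_subgroup_hclass (Q Sigma : finType)
    (A : expanding_automaton Q Sigma) (G : (seq Sigma -> seq Sigma) -> Prop) :
  unique_maximal_subgroup A G ->
  exists e, [/\ in_ea_semigroup A e, e \o e = e,
    forall h, in_ea_semigroup A h -> h \o h = h -> h = e &
    forall f, G f <-> hclass A e f].
Proof.
move=> [[[GS [_ [e [Ge [idG invG]]]]] _] uniq].
have ee : e \o e = e by case: (idG e Ge).
have idl f : G f -> e \o f = f by move/idG => [].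
exists e; split=> //.
- exact: GS.
- move=> h Sh hh; apply: (idempotent_group_identity idl invG) => //.
  by apply/(uniq _ (hclass_maximal Sh hh))/hclass_id.
- by move=> f; rewrite -(uniq _ (hclass_maximal (GS e Ge) ee)).
Qed.

Section UniqueIdempotent.
Variables (Q Sigma : finType) (A : expanding_automaton Q Sigma).
Local Notation S := (in_ea_semigroup A).
Local Notation W := (seq Sigma).
Variable e : W -> W.
Hypotheses (Se : S e) (ee : e \o e = e)
  (idempotent_e : forall h, S h -> h \o h = h -> h = e).
Local Notation G := (hclass A e).

Let size_gt0 (s : W) : (0 < size s) = (s != [::]). Proof. by case: s. Qed.

Lemma hclass_semigroup f : G f -> S f. Proof. by case. Qed.

Lemma hclass_fixed f w : G f -> e (f w) = f w.
Proof. by move=> [_ [ef _]]; rewrite -{2}ef. Qed.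

Lemma hclass_absorb f w : G f -> f (e w) = f w.
Proof. by move=> [_ [_ [fe _]]]; rewrite -{2}fe. Qed.

Lemma sect_fixed w : e w = w -> sect e w = e.
Proof.
move=> ew; apply: idempotent_e; first exact: sect_semigroup.
by rewrite -{3}ee (sect_comp w Se Se) ew.
Qed.

Lemma fixed_cat u v : e u = u -> e (u ++ v) = u ++ e v.
Proof. by move=> eu; rewrite (sect_cat _ _ Se) sect_fixed eu. Qed.

Lemma fixed_catr u v : e u = u -> e (u ++ v) = u ++ v -> e v = v.
Proof. by move=> eu; rewrite fixed_cat // => /(congr1 (drop (size u))); rewrite !drop_size_cat. Qed.

Lemma hclass_size f w : G f -> e w = w -> size (f w) = size w.
Proof.
move=> [Sf [_ [_ [g [Sg [_ [_ [_ gf]]]]]]]] ew.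
apply/eqP; rewrite eqn_leq (ea_semigroup_size Sf) andbT.
by rewrite -{2}ew -gf (ea_semigroup_size Sg).
Qed.

Lemma sect_hclass f u : G f -> e u = u -> G (sect f u).
Proof.
move=> Gf eu; have efu := hclass_fixed u Gf.
case: Gf => Sf [ef [fe [g [Sg [eg [ge [fg gf]]]]]]].
have gfu : g (f u) = u by rewrite -[g (f u)]/((g \o f) u) gf.
have egfu : e (g (f u)) = g (f u) by rewrite gfu.
split; first exact: sect_semigroup.
split; first by rewrite -(sect_fixed efu) -(sect_comp u Se Sf) ef.
split; first by rewrite -(sect_fixed eu) -{1}eu -(sect_comp u Sf Se) fe.
exists (sect g (f u)); split; first exact: sect_semigroup.
split; first by rewrite -(sect_fixed egfu) -(sect_comp (f u) Se Sg) eg.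
split; first by rewrite -(sect_fixed efu) -{1}efu -(sect_comp (f u) Sg Se) ge.
split; first by rewrite -{1}gfu -(sect_comp (f u) Sf Sg) fg sect_fixed.
by rewrite -(sect_comp u Sg Sf) gf sect_fixed.
Qed.

Definition atom (x : W) : bool :=
  [&& x != [::], e x == x &
      ~~ has (fun i => e (take i x) == take i x) (iota 1 (size x).-1)].

Lemma atom_fixed (x : W) : atom x -> e x = x.
Proof. by case/and3P=> _ /eqP. Qed.

Lemma atom_prefix (x y z : W) : atom x -> x = y ++ z -> e y = y -> y = [::] \/ z = [::].
Proof.
case/and3P=> _ _ /hasPn noprefix xE ey.
have [-> | ny] := eqVneq y [::]; first by left.
have [-> | nz] := eqVneq z [::]; first by right.
have : size y \in iota 1 (size x).-1.
  by move: ny nz; rewrite mem_iota xE size_cat -!size_gt0; lia.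
by move/noprefix; rewrite xE take_size_cat // ey eqxx.
Qed.

Lemma atomI (x : W) : x != [::] -> e x = x ->
  (forall y z : W, x = y ++ z -> e y = y -> y = [::] \/ z = [::]) -> atom x.
Proof.
move=> nx ex noprefix; rewrite /atom nx ex eqxx /=; apply/hasPn => i.
rewrite mem_iota => irange; apply/negP => /eqP ei.
move: nx irange; rewrite -size_gt0 => nx irange.
have [E|E] := noprefix _ _ (esym (cat_take_drop i x)) ei.
  by move: (congr1 size E); rewrite size_take; case: ltnP => /=; lia.
by move: (congr1 size E); rewrite size_drop /=; lia.
Qed.

Lemma not_atom_split (x : W) : x != [::] -> e x = x -> ~~ atom x ->
  exists y z : W, [/\ x = y ++ z, e y = y, y != [::] & z != [::]].
Proof.
move=> nx ex; rewrite /atom nx ex eqxx negbK => /hasP [i].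
rewrite mem_iota => irange /eqP ei.
move: nx irange; rewrite -size_gt0 => nx irange.
exists (take i x), (drop i x); split; rewrite ?cat_take_drop // -size_gt0.
  by rewrite size_take; case: (ltnP i (size x)); lia.
by rewrite size_drop; lia.
Qed.

Lemma fixed_flatten_atoms (w : W) : e w = w -> exists2 xs, all atom xs & w = flatten xs.
Proof.
have [n] := ubnP (size w); elim: n w => // n IH w sw ew.
have [-> | nw] := eqVneq w [::]; first by exists [::].
have [aw | naw] := boolP (atom w); first by exists [:: w]; rewrite /= ?aw ?cats0.
have [y [z [wE ey ny nz]]] := not_atom_split nw ew naw.
have ez : e z = z by apply: (fixed_catr ey); rewrite -wE.
move: ny nz; rewrite -!size_gt0 => ny nz.
have [|ys ay yE] := IH y _ ey; first by move: sw; rewrite wE size_cat; lia.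
have [|zs az zE] := IH z _ ez; first by move: sw; rewrite wE size_cat; lia.
by exists (ys ++ zs); rewrite ?all_cat ?ay ?az // flatten_cat -yE -zE.
Qed.

Lemma atom_letter (x : W) : atom x -> exists c, x = e [:: c].
Proof.
case: x => [//|c x'] ax; exists c.
have ec : e (e [:: c]) = e [:: c] by rewrite -[e (e _)]/((e \o e) _) ee.
have nc : e [:: c] != [::] by rewrite -size_gt0 (ea_semigroup_size Se [:: c]).
have xE : c :: x' = e [:: c] ++ sect e [:: c] x' by rewrite -(sect_cat _ _ Se) /= atom_fixed.
case: (atom_prefix ax xE ec) => [/eqP|]; first by rewrite (negbTE nc).
by rewrite xE => ->; rewrite cats0.
Qed.

Definition atoms : seq W := [seq x <- [seq e [:: c] | c <- enum Sigma] | atom x].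

Lemma mem_atoms (x : W) : (x \in atoms) = atom x.
Proof.
rewrite mem_filter andb_idr // => /atom_letter [c ->].
by apply: map_f; rewrite mem_enum.
Qed.

Lemma hclass_atom f (x : W) : G f -> atom x -> atom (f x).
Proof.
move=> Gf ax; have ex := atom_fixed ax.
have nx : x != [::] by case/and3P: ax.
apply: atomI; first by rewrite -size_eq0 (hclass_size Gf ex) size_eq0.
  exact: hclass_fixed.
move=> y z fxE ey.
have [g [Gg [_ gf]]] := hclass_inv Gf.
have ez : e z = z by apply: (fixed_catr ey); rewrite -fxE hclass_fixed.
have xE : x = g y ++ sect g y z.
  by rewrite -(sect_cat _ _ (hclass_semigroup Gg)) -fxE -[g (f x)]/((g \o f) x) gf.
case: (atom_prefix ax xE (hclass_fixed y Gg)) => /eqP; rewrite -size_eq0 => /eqP.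
  by rewrite (hclass_size Gg ey) => /size0nil; left.
by rewrite (hclass_size (sect_hclass Gg ey) ez) => /size0nil; right.
Qed.

Local Notation X := (seq_sub atoms).

Lemma atom_val (x : X) : atom (val x).
Proof. by rewrite -mem_atoms; apply: valP. Qed.

Lemma atoms_lift (xs : seq W) : all atom xs -> map val (pmap insub xs : seq X) = xs.
Proof.
move=> axs; rewrite (pmap_filter (insubK _)); apply/all_filterP.
by apply: sub_all axs => x ax; rewrite /= isSome_insub mem_atoms.
Qed.

Definition letter_act f (x : X) : X := insubd x (f (val x)).

Lemma val_letter_act f x : G f -> val (letter_act f x) = f (val x).
Proof. by move=> Gf; rewrite val_insubd mem_atoms hclass_atom ?atom_val. Qed.

Fixpoint atom_act f (xs : seq X) : seq X :=
  if xs is x :: xs' then letter_act f x :: atom_act (sect f (val x)) xs' else [::].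

Lemma flatten_atom_act f xs :
  G f -> flatten (map val (atom_act f xs)) = f (flatten (map val xs)).
Proof.
elim: xs f => [|x xs IH] f Gf /=; first by rewrite (ea_semigroup_nil (hclass_semigroup Gf)).
rewrite val_letter_act // IH; last exact: sect_hclass Gf (atom_fixed (atom_val x)).
by rewrite -(sect_cat _ _ (hclass_semigroup Gf)).
Qed.

Lemma atom_act_comp f g xs : G f -> G g ->
  atom_act (f \o g) xs = atom_act f (atom_act g xs).
Proof.
elim: xs f g => [|x xs IH] f g Gf Gg //=.
have ex := atom_fixed (atom_val x).
congr (_ :: _).
  by apply: val_inj; rewrite (val_letter_act _ (hclass_comp Gf Gg)) !val_letter_act.
rewrite val_letter_act // (sect_comp _ (hclass_semigroup Gf) (hclass_semigroup Gg)).
by rewrite IH //; apply: sect_hclass => //; exact: hclass_fixed.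
Qed.

Lemma atom_act_id xs : atom_act e xs = xs.
Proof.
elim: xs => //= x xs IH; have ex := atom_fixed (atom_val x).
rewrite sect_fixed // IH; congr (_ :: _).
by apply: val_inj; rewrite val_letter_act //; exact: hclass_id.
Qed.

Definition hclass_state := {f | G f}.

Definition hclass_state_sect (s : hclass_state) (x : X) : hclass_state :=
  exist _ (sect (sval s) (val x)) (sect_hclass (svalP s) (atom_fixed (atom_val x))).

Lemma letter_act_bij (s : hclass_state) : bijective (letter_act (sval s)).
Proof.
case: s => f /= Gf; have [g [Gg [fg gf]]] := hclass_inv Gf.
exists (letter_act g) => x; apply: val_inj; rewrite !val_letter_act //.
  by rewrite -[g _]/((g \o f) _) gf atom_fixed ?atom_val.
by rewrite -[f _]/((f \o g) _) fg atom_fixed ?atom_val.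
Qed.

Definition hclass_automaton : ss_automaton X :=
  @SSAut X hclass_state hclass_state_sect (fun s => letter_act (sval s)) letter_act_bij.

Lemma ss_act_atom_act (s : hclass_state) : ss_act (B := hclass_automaton) s = atom_act (sval s).
Proof.
apply: functional_extensionality => xs.
by elim: xs s => //= x xs IH s; rewrite IH.
Qed.

Lemma hclass_iso : group_iso_to_ss G hclass_automaton.
Proof.
exists atom_act; split.
  by move=> f Gf; rewrite -[f]/(sval (exist G f Gf)) -ss_act_atom_act; apply: ssg_gen.
split.
  move=> f g Gf Gg fg; apply: functional_extensionality => w.
  rewrite -(hclass_absorb w Gf) -(hclass_absorb w Gg).
  have [xs axs ->] := fixed_flatten_atoms (hclass_fixed w (hclass_id Se ee)).
  by rewrite -(atoms_lift axs) -!flatten_atom_act // fg.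
split.
  move=> h; elim=> [|q|f1 g1 _ [a [Ga <-]] _ [b [Gb <-]]|f1 g1 _ [a [Ga Ea]] i j].
  - exists e; split; first exact: hclass_id.
    by apply: functional_extensionality => xs; exact: atom_act_id.
  - by exists (sval q); split; [exact: svalP | rewrite ss_act_atom_act].
  - exists (a \o b); split; first exact: hclass_comp.
    by apply: functional_extensionality => xs; rewrite atom_act_comp.
  - have [a' [Ga' [_ a'a]]] := hclass_inv Ga.
    exists a'; split=> //; apply: functional_extensionality => w.
    by rewrite -{1}(i w) -Ea -atom_act_comp // a'a atom_act_id.
by move=> f g Gf Gg; apply: functional_extensionality => xs; exact: atom_act_comp.
Qed.

End UniqueIdempotent.

Lemma group_iso_to_ss_eq (Sigma X : finType) (G H : (seq Sigma -> seq Sigma) -> Prop)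
    (B : ss_automaton X) :
  (forall f, G f <-> H f) -> group_iso_to_ss H B -> group_iso_to_ss G B.
Proof.
move=> GH [phi [into [inj [onto hom]]]]; exists phi; split; first by move=> f /GH /into.
split; first by move=> f g /GH Gf /GH Gg; exact: inj.
split; first by move=> h /onto [f [/GH Gf <-]]; exists f.
by move=> f g /GH Gf /GH Gg; exact: hom.
Qed.

Theorem mainTheorem12 (Q Sigma : finType) (A : expanding_automaton Q Sigma)
    (G : (seq Sigma -> seq Sigma) -> Prop) :
  unique_maximal_subgroup A G -> iso_to_self_similar_group G.
Proof.
move=> /unique_maximal_subgroup_hclass [e [Se ee idempotent_e GE]].
exists (seq_sub (atoms e)), (hclass_automaton Se ee idempotent_e).
exact: group_iso_to_ss_eq GE (hclass_iso Se ee idempotent_e).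
Qed.
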